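(* Let $G=(V,E)$ be a finite directed graph with $k$ players; player $i$ has a source–sink pair $(s_i,t_i)$ and flow amount $r_i>0$, and routes all of $r_i$ along a single path $P_i$ in the set $\Pi_i$ of $s_i$–$t_i$ paths. For a feasible flow $f$ (a choice of $P_i\in\Pi_i$ for each $i$), let $f_e=\sum_{i:e\in P_i} r_i$. Each edge $e$ has an affine congestion function $c_e(x)=a_e x+b_e$ with $c_e:\mathbb{R}^+\to\mathbb{R}^+$, and a unit-price function $u_e:\mathbb{R}^+\to\mathbb{R}^+$; the cost to player $i$ of path $P$ is $t^i_P(f)=\sum_{e\in P}\bigl(c_e(f_e)+u_e(r_i)\bigr)$. The social cost of $f$ is $$SC(f)=\sum_{e\in E} c_e(f_e)f_e+\sum_{i=1}^k\sum_{e\in P_i}u_e(r_i)\,r_i .$$ A flow $f$ is an equilibrium flow if no player $i$ can obtain $t^i_{\tilde P}(\tilde f)<t^i_{P_i}(f)$ by switching to another path $\tilde P\in\Pi_i$, where $\tilde f$ is $f$ with player $i$'s path replaced by $\tilde P$. Let $f^*$ be a feasible flow minimizing $SC$. Then for every equilibrium flow $f$, $$\frac{SC(f)}{SC(f^* )}\le\frac{3+\sqrt5}{2},$$ i.e. the price of anarchy is at most $\frac{3+\sqrt5}{2}\approx 2.618$.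
   Context: The price of anarchy is the ratio of the social cost of the worst equilibrium flow to the social cost of an optimal (social-cost-minimizing) feasible flow. *)

From HB Require Import structures.
From mathcomp Require Import all_boot all_order all_algebra.
From mathcomp Require Import reals.
Set Implicit Arguments. Unset Strict Implicit. Unset Printing Implicit Defensive.
Import Order.TTheory GRing.Theory Num.Theory.
Local Open Scope ring_scope.

Section Network.
(* A finite directed (multi)graph: vertex type V, edge type E,
   each edge e goes from [tl e] to [hd e]. *)
Variables (V E : finType) (tl hd : E -> V).

Fixpoint is_walk (x y : V) (p : seq E) : bool :=
  match p with
  | [::] => x == y
  | e :: p' => (tl e == x) && is_walk (hd e) y p'
  end.

Definition is_path (x y : V) (p : seq E) : bool :=
  is_walk x y p && uniq (x :: map hd p).

Variable R : realType.
Variable k : nat.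
Variables (s t : 'I_k -> V) (r : 'I_k -> R).
Variables (a b : E -> R) (u : E -> R -> R).

(* a (pure) flow = choice of one path per player *)
Definition flow := 'I_k -> seq E.

Definition feasible (P : flow) : Prop := forall i, is_path (s i) (t i) (P i).

Definition load (P : flow) (e : E) : R := \sum_(i < k | e \in P i) r i.

Definition cong (e : E) (x : R) : R := a e * x + b e.

Definition pcost (i : 'I_k) (P : flow) (p : seq E) : R :=
  \sum_(e <- p) (cong e (load P e) + u e (r i)).

Definition SC (P : flow) : R :=
  \sum_(e : E) cong e (load P e) * load P e
  + \sum_(i < k) \sum_(e <- P i) u e (r i) * r i.

Definition switch (P : flow) (i : 'I_k) (p : seq E) : flow :=
  fun j => if j == i then p else P j.

Definition equilibrium (P : flow) : Prop :=
  feasible P /\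
  forall i p, is_path (s i) (t i) p ->
    ~ (pcost i (switch P i p) p < pcost i P (P i)).

Definition optimal (P : flow) : Prop :=
  feasible P /\ forall Q, feasible Q -> SC P <= SC Q.

End Network.

(* Smoothness argument.  Weighting each player's equilibrium condition against
   the deviation to her path in the optimum g by r_i and summing gives
   SC(f) <= sum_e [c_e(f_e) g_e + a_e sum_{i : e in g_i} r_i^2 + prices paid in g],
   and each edge term is at most lambda times its share of SC(f) plus mu times
   its share of SC(g), with lambda = (sqrt 5 - 1)/4 and mu = (5 + sqrt 5)/4;
   these are the constants for which x y + y^2 <= lambda x^2 + mu y^2 is a
   perfect square.  Hence SC(f) <= mu / (1 - lambda) SC(g) = (3 + sqrt 5)/2 SC(g). *)
From HB Require Import structures.
From mathcomp Require Import all_boot all_order all_algebra.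
From mathcomp Require Import reals.
From mathcomp Require Import ring lra.
Set Implicit Arguments. Unset Strict Implicit. Unset Printing Implicit Defensive.
Import Order.TTheory GRing.Theory Num.Theory.
Local Open Scope ring_scope.

Lemma exchange_big_seq (M : nmodType) (I T : finType) (P : I -> seq T)
    (F : I -> T -> M) :
  (forall i, uniq (P i)) ->
  \sum_i \sum_(x <- P i) F i x = \sum_x \sum_(i | x \in P i) F i x.
Proof.
move=> uniqP; rewrite (eq_bigr (fun i => \sum_x (if x \in P i then F i x else 0))).
  by rewrite exchange_big; apply: eq_bigr => x _; rewrite [RHS]big_mkcond.
by move=> i _; rewrite big_uniq // big_mkcond.
Qed.

Lemma sum_sqr_le_sqr_sum (R : numDomainType) (I : finType) (P : pred I)
    (x : I -> R) :
  (forall i, 0 <= x i) -> \sum_(i | P i) x i ^+ 2 <= (\sum_(i | P i) x i) ^+ 2.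
Proof.
move=> x_ge0; rewrite [leRHS]expr2 mulr_suml; apply: ler_sum => i Pi.
by rewrite expr2 ler_wpM2l // (bigD1 i) //= lerDl sumr_ge0.
Qed.

Lemma smooth_ratio (R : realFieldType) (x y lambda mu : R) :
  lambda < 1 -> x <= lambda * x + mu * y -> x <= mu / (1 - lambda) * y.
Proof.
move=> lt_lambda1 smooth; have pos : 0 < 1 - lambda by rewrite subr_gt0.
by rewrite mulrAC ler_pdivlMr // mulrBr mulr1 lerBlDr addrC (mulrC x).
Qed.

Section GoldenRatio.
Variable R : rcfType.

Let c : R := Num.sqrt 5.

Lemma sqrt5_sq : c ^+ 2 = 5.
Proof. by rewrite sqr_sqrtr. Qed.

Lemma sqrt5_gt1 : 1 < c.
Proof. by rewrite -sqrtr1 ltr_sqrt // ltr1n. Qed.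

Lemma sqrt5_lt5 : c < 5.
Proof. by have := sqrt5_sq; have := sqrtr_ge0 (5 : R); rewrite expr2; nra. Qed.

Lemma golden_smooth (x y : R) :
  x * y + y ^+ 2 <= (c - 1) / 4 * x ^+ 2 + (5 + c) / 4 * y ^+ 2.
Proof.
have c1 : 0 < c - 1 by rewrite subr_gt0 sqrt5_gt1.
rewrite -subr_ge0 -(pmulr_rge0 _ c1).
have -> : (c - 1) * ((c - 1) / 4 * x ^+ 2 + (5 + c) / 4 * y ^+ 2 - (x * y + y ^+ 2))
    = ((c - 1) * x - 2 * y) ^+ 2 / 4 + (c ^+ 2 - 5) * y ^+ 2 / 4 by field.
by rewrite sqrt5_sq subrr !mul0r addr0 divr_ge0 // sqr_ge0.
Qed.

Lemma golden_ratio_bound :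
  (5 + c) / 4 / (1 - (c - 1) / 4) = (3 + c) / 2.
Proof.
have c5 : 5 - c != 0 by rewrite subr_eq0 gt_eqF // sqrt5_lt5.
apply/eqP; rewrite -subr_eq0; apply/eqP.
have -> : (5 + c) / 4 / (1 - (c - 1) / 4) - (3 + c) / 2 = (c ^+ 2 - 5) / (2 * (5 - c)).
  by field; rewrite c5.
by rewrite sqrt5_sq subrr mul0r.
Qed.

End GoldenRatio.

Section CongestionGame.
Variables (V E : finType) (tl hd : E -> V) (R : realType) (k : nat).
Variables (s t : 'I_k -> V) (r : 'I_k -> R) (a b : E -> R) (u : E -> R -> R).
Hypotheses (r_gt0 : forall i, 0 < r i) (a_ge0 : forall e, 0 <= a e)
  (b_ge0 : forall e, 0 <= b e) (u_ge0 : forall e x, 0 <= x -> 0 <= u e x).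

Lemma path_uniq x y (p : seq E) : is_path tl hd x y p -> uniq p.
Proof. by case/andP=> _ /= /andP[_ /map_uniq]. Qed.

Lemma feasible_uniq (P : flow E k) : feasible tl hd s t P -> forall i, uniq (P i).
Proof. by move=> feasP i; apply: path_uniq (feasP i). Qed.

Definition payment (P : flow E k) (e : E) : R :=
  \sum_(i | e \in P i) u e (r i) * r i.

Definition load2 (P : flow E k) (e : E) : R := \sum_(i | e \in P i) r i ^+ 2.

Lemma load_ge0 (P : flow E k) e : 0 <= load r P e.
Proof. by apply: sumr_ge0 => i _; apply: ltW. Qed.

Lemma payment_ge0 (P : flow E k) e : 0 <= payment P e.
Proof. by apply: sumr_ge0 => i _; rewrite mulr_ge0 ?u_ge0 // ltW. Qed.

Lemma load2_le_sqr_load (P : flow E k) e : load2 P e <= load r P e ^+ 2.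
Proof. by apply: sum_sqr_le_sqr_sum => i; apply: ltW. Qed.

Lemma load_switch_le (P : flow E k) i p e :
  load r (switch P i p) e <= load r P e + r i.
Proof.
rewrite /load big_mkcond [X in _ <= X + _]big_mkcond /=.
rewrite (bigD1 i) //= [X in _ <= X + _](bigD1 i) //= /switch eqxx.
rewrite (eq_bigr (fun j => if e \in P j then r j else 0)); last first.
  by move=> j /negbTE ->.
by have := r_gt0 i; case: (e \in p); case: (e \in P i); lra.
Qed.

Lemma SC_edgewise (P : flow E k) : feasible tl hd s t P ->
  SC r a b u P = \sum_e (cong a b e (load r P e) * load r P e + payment P e).
Proof. by move=> /feasible_uniq uniqP; rewrite /SC exchange_big_seq // big_split. Qed.

Lemma SC_weighted_pcost (P : flow E k) : feasible tl hd s t P ->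
  SC r a b u P = \sum_i r i * pcost r a b u i P (P i).
Proof.
move=> feasP; rewrite SC_edgewise //.
under [RHS]eq_bigr do rewrite /pcost mulr_sumr.
rewrite (exchange_big_seq _ (feasible_uniq feasP)); apply eq_bigr => e _.
rewrite /load /payment mulr_sumr -big_split; apply: eq_bigr => i _ /=.
by rewrite mulrDr ![r i * _]mulrC.
Qed.

Lemma pcost_switch_le (P : flow E k) i p :
  pcost r a b u i (switch P i p) p <=
  \sum_(e <- p) (cong a b e (load r P e + r i) + u e (r i)).
Proof.
apply: ler_sum => e _; rewrite lerD2r lerD2r.
by rewrite ler_wpM2l ?load_switch_le.
Qed.

Lemma equilibrium_variational (f g : flow E k) :
  equilibrium tl hd s t r a b u f -> feasible tl hd s t g ->
  SC r a b u f <= \sum_e (cong a b e (load r f e) * load r g e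
                          + a e * load2 g e + payment g e).
Proof.
move=> [feasf eqf] feasg; rewrite SC_weighted_pcost //.
have deviate i : pcost r a b u i f (f i) <=
    \sum_(e <- g i) (cong a b e (load r f e + r i) + u e (r i)).
  by apply: le_trans (pcost_switch_le f i (g i)); rewrite leNgt; apply/negP/eqf.
apply: le_trans (ler_sum _ (fun i _ => ler_wpM2l (ltW (r_gt0 i)) (deviate i))) _.
under eq_bigr do rewrite mulr_sumr.
rewrite (exchange_big_seq _ (feasible_uniq feasg)); apply: ler_sum => e _.
rewrite /load2 /payment [X in _ * X]/load !mulr_sumr -!big_split /=.
by apply: ler_sum => i _; rewrite /cong; lra.
Qed.

Lemma edge_smooth (f g : flow E k) e :
  cong a b e (load r f e) * load r g e + a e * load2 g e + payment g e <=
  (Num.sqrt 5 - 1) / 4 * (cong a b e (load r f e) * load r f e + payment f e) +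
  (5 + Num.sqrt 5) / 4 * (cong a b e (load r g e) * load r g e + payment g e).
Proof.
rewrite /cong; set x := load r f e; set y := load r g e.
have c_gt1 : 1 < Num.sqrt 5 :> R := sqrt5_gt1 R.
have quad := ler_wpM2l (a_ge0 e) (golden_smooth x y).
have load2_le := ler_wpM2l (a_ge0 e) (load2_le_sqr_load g e).
have lin_f : 0 <= (Num.sqrt 5 - 1) * (b e * x + payment f e).
  apply: mulr_ge0; first by rewrite subr_ge0 ltW.
  by rewrite addr_ge0 ?payment_ge0 ?mulr_ge0 ?load_ge0.
have lin_g : 0 <= (1 + Num.sqrt 5) * (b e * y + payment g e).
  by rewrite !mulr_ge0 ?addr_ge0 ?sqrtr_ge0 ?payment_ge0 ?mulr_ge0 ?load_ge0.
rewrite expr2 in quad load2_le; lra.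
Qed.

End CongestionGame.

Theorem mainTheorem3 (V E : finType) (tl hd : E -> V) (R : realType) (k : nat)
  (s t : 'I_k -> V) (r : 'I_k -> R) (a b : E -> R) (u : E -> R -> R)
  (hr : forall i, 0 < r i)
  (ha : forall e, 0 <= a e) (hb : forall e, 0 <= b e)
  (hu : forall e x, 0 <= x -> 0 <= u e x)
  (fstar f : flow E k) :
  optimal tl hd s t r a b u fstar ->
  equilibrium tl hd s t r a b u f ->
  SC r a b u f <= (3 + Num.sqrt 5) / 2 * SC r a b u fstar.
Proof.
move=> [feas_star _] eqf; have [feasf _] := eqf.
rewrite -golden_ratio_bound; apply: smooth_ratio.
  by have := sqrt5_lt5 R; lra.
rewrite [in leRHS](SC_edgewise r a b u feasf) (SC_edgewise r a b u feas_star).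
rewrite !mulr_sumr -big_split.
apply: le_trans (equilibrium_variational hr ha eqf feas_star) _.
by apply: ler_sum => e _; apply: edge_smooth.
Qed.
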